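(* Let $a(x)=1+x^i$ and $b(x)=x^j+x^{j+k}$ be two polynomials of weight two in $\mathbb{F}_2[x]/\langle x^n-1\rangle$. Then the girth $g(G)$ of the Tanner graph associated with the generalized bicycle code defined by $a(x)$ and $b(x)$ satisfies $g(G)\le 8$.
   Context: The Tanner graph of the GB code defined by $a(x)=\sum a_tx^t$, $b(x)=\sum b_tx^t$ is the bipartite graph with $n$ check nodes $x_0,\dots,x_{n-1}$ (X-checks) and $2n$ qubit nodes $q_0,\dots,q_{n-1},q'_0,\dots,q'_{n-1}$, where $x_t$ is adjacent to $q_c$ iff $a_{t-c}=1$ and to $q'_c$ iff $b_{t-c}=1$ (indices mod $n$). The girth is the length of a shortest cycle. *)

From HB Require Import structures.
From mathcomp Require Import all_boot all_order all_algebra.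
Set Implicit Arguments. Unset Strict Implicit. Unset Printing Implicit Defensive.
Import GRing.Theory.
Local Open Scope ring_scope.

(* An element of F_2[x]/<x^n - 1> is represented by its coefficient vector
   (a_0, ..., a_{n-1}) : 'I_n -> 'F_2. *)

Definition coef_mod (n : nat) (a : 'I_n -> 'F_2) (s : nat) : 'F_2 :=
  if (insub (s %% n)%N : option 'I_n) is Some t then a t else 0.

Definition monom (n e : nat) : 'I_n -> 'F_2 :=
  fun t => ((val t == e %% n)%N)%:R.
Arguments monom n e : clear implicits.

Definition poly_one (n : nat) : 'I_n -> 'F_2 := monom n 0.
Arguments poly_one n : clear implicits.

Definition padd (n : nat) (a b : 'I_n -> 'F_2) : 'I_n -> 'F_2 :=
  fun t => a t + b t.

Definition weight (n : nat) (a : 'I_n -> 'F_2) : nat :=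
  #|[set t : 'I_n | a t != 0]|.

(* Vertices of the Tanner graph: X-checks x_t (inl t), qubits q_c (inr (inl c))
   and q'_c (inr (inr c)). *)
Definition tvert (n : nat) : finType := ('I_n + ('I_n + 'I_n))%type.
Arguments tvert n : clear implicits.

Definition tanner_adj (n : nat) (a b : 'I_n -> 'F_2) : rel (tvert n) :=
  fun u v =>
    match u, v with
    | inl t, inr (inl c) => coef_mod a (t + n - c)%N != 0
    | inl t, inr (inr c) => coef_mod b (t + n - c)%N != 0
    | inr (inl c), inl t => coef_mod a (t + n - c)%N != 0
    | inr (inr c), inl t => coef_mod b (t + n - c)%N != 0
    | _, _ => false
    end.

Definition is_graph_cycle (V : finType) (e : rel V) (c : seq V) : bool :=
  [&& (3 <= size c)%N, uniq c & cycle e c].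

(* girth(G) <= m  iff  G has a cycle of length at most m
   (the girth of an acyclic graph being +infinity) *)
Definition girth_le (V : finType) (e : rel V) (m : nat) : Prop :=
  exists c : seq V, is_graph_cycle e c /\ (size c <= m)%N.

(* Write a = 1 + x^I and b = x^J + x^(J+K) over Z_n; weight two forces n >= 2,
   I <> 0 and K <> 0. The closed walk
     x_0 q_0 x_I q'_(I-J) x_(I+K) q_K x_K q'_(-J)
   uses each of the edges given by a_0, a_I, b_J, b_(J+K) twice and is an
   8-cycle unless I = K or I + K = 0. In those two cases x_0 q_0 x_I q'_c is a
   4-cycle, for c = -J and c = I - J respectively. *)

From mathcomp Require Import all_boot all_order all_algebra.
From mathcomp Require Import ring.

Set Implicit Arguments.
Unset Strict Implicit.
Unset Printing Implicit Defensive.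
Import GRing.Theory.
Local Open Scope ring_scope.

(* so that [/=] unfolds [cycle] and [uniq] but leaves [tanner_adjE] applicable *)
Local Arguments tanner_adj : simpl never.

Lemma eq_inl (A B : eqType) (x y : A) : (inl x == inl y :> A + B) = (x == y).
Proof. by []. Qed.

Lemma eq_inr (A B : eqType) (x y : B) : (inr x == inr y :> A + B) = (x == y).
Proof. by []. Qed.

Lemma eq_inlr (A B : eqType) (x : A) (y : B) : (inl x == inr y :> A + B) = false.
Proof. by []. Qed.

Lemma eq_inrl (A B : eqType) (x : B) (y : A) : (inr x == inl y :> A + B) = false.
Proof. by []. Qed.

Definition eq_sumE := (eq_inl, eq_inr, eq_inlr, eq_inrl).

Lemma eqr_addr_id (V : zmodType) (x y : V) : (x == x + y) = (y == 0).
Proof. by rewrite -{1}[x]addr0 (inj_eq (addrI x)) eq_sym. Qed.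

Lemma eqr_addl_id (V : zmodType) (x y : V) : (x + y == y) = (x == 0).
Proof. by rewrite -{2}[y]add0r (inj_eq (addIr y)). Qed.

Lemma weight_le (n : nat) (a : 'I_n -> 'F_2) : (weight a <= n)%N.
Proof. by rewrite /weight -[n in (_ <= n)%N]card_ord max_card. Qed.

Section CoefficientsModN.

Variable m : nat.
Local Notation n := m.+2.
Implicit Types (a b : 'I_n -> 'F_2) (t c : 'Z_n).

Lemma coef_mod_sub a t c : coef_mod a (t + n - c)%N = a (t - c).
Proof.
have tc_mod : ((t + n - c) %% n)%N = val (t - c).
  by rewrite /= -addnBA ?modnDmr // ltnW.
rewrite /coef_mod insubT ?tc_mod ?ltn_mod // => tc_lt.
by congr a; apply: val_inj.
Qed.

Lemma tanner_adj_xq a b t c :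
  tanner_adj a b (inl t) (inr (inl c)) = (a (t - c) != 0).
Proof. by rewrite /tanner_adj coef_mod_sub. Qed.

Lemma tanner_adj_qx a b t c :
  tanner_adj a b (inr (inl c)) (inl t) = (a (t - c) != 0).
Proof. by rewrite /tanner_adj coef_mod_sub. Qed.

Lemma tanner_adj_xq' a b t c :
  tanner_adj a b (inl t) (inr (inr c)) = (b (t - c) != 0).
Proof. by rewrite /tanner_adj coef_mod_sub. Qed.

Lemma tanner_adj_q'x a b t c :
  tanner_adj a b (inr (inr c)) (inl t) = (b (t - c) != 0).
Proof. by rewrite /tanner_adj coef_mod_sub. Qed.

Definition tanner_adjE :=
  (tanner_adj_xq, tanner_adj_qx, tanner_adj_xq', tanner_adj_q'x).

Lemma monomE (e : nat) (u : 'Z_n) : monom n e u = (u == e%:R)%:R.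
Proof. by rewrite /monom [e%:R]Zp_nat -val_eqE. Qed.

Lemma binomial_coef_neq0 (e1 e2 : nat) (u : 'Z_n) :
  (padd (monom n e1) (monom n e2) u != 0) = (u == e1%:R) (+) (u == e2%:R).
Proof. by rewrite /padd !monomE; case: (u == e1%:R); case: (u == e2%:R). Qed.

Lemma binomial_weight2_neq (e1 e2 : nat) :
  weight (padd (monom n e1) (monom n e2)) = 2%N -> e1%:R != e2%:R :> 'Z_n.
Proof.
apply: contra_eqN => /eqP e12; rewrite /weight.
suff -> : [set u | padd (monom n e1) (monom n e2) u != 0] = set0 by rewrite cards0.
by apply/setP => u; rewrite !inE binomial_coef_neq0 e12 addbb.
Qed.

Lemma binomial_coef_neq0_l (e1 e2 : nat) : e1%:R != e2%:R :> 'Z_n ->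
  padd (monom n e1) (monom n e2) e1%:R != 0.
Proof. by rewrite binomial_coef_neq0 eqxx => /negbTE->. Qed.

Lemma binomial_coef_neq0_r (e1 e2 : nat) : e1%:R != e2%:R :> 'Z_n ->
  padd (monom n e1) (monom n e2) e2%:R != 0.
Proof. by rewrite binomial_coef_neq0 eqxx eq_sym => /negbTE->. Qed.

End CoefficientsModN.

Section WeightTwoTannerCycles.

Variables (m : nat) (a b : 'I_m.+2 -> 'F_2) (I J K : 'Z_m.+2).
Hypotheses (a0 : a 0 != 0) (aI : a I != 0) (bJ : b J != 0) (bJK : b (J + K) != 0).
Hypotheses (I_neq0 : I != 0) (K_neq0 : K != 0).

Lemma tanner_4cycle c : b (- c) != 0 -> b (I - c) != 0 ->
  is_graph_cycle (tanner_adj a b) [:: inl 0; inr (inl 0); inl I; inr (inr c)].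
Proof.
move=> bNc bIc; rewrite /is_graph_cycle /= !tanner_adjE subrr subr0 sub0r.
by rewrite a0 aI bNc bIc !inE !eq_sumE eq_sym (negbTE I_neq0).
Qed.

Lemma tanner_8cycle : I != K -> I + K != 0 ->
  is_graph_cycle (tanner_adj a b)
    [:: inl 0; inr (inl 0); inl I; inr (inr (I - J));
        inl (I + K); inr (inl K); inl K; inr (inr (- J))].
Proof.
move=> IK IK_neq0; rewrite /is_graph_cycle /= !tanner_adjE.
rewrite subKr.
have -> : I + K - (I - J) = J + K by ring.
have -> : I + K - K = I by ring.
have -> : K - - J = J + K by ring.
rewrite !subrr subr0 sub0r opprK a0 aI bJ bJK !andbT !inE !eq_sumE /= !orbF.
rewrite ![0 == _]eq_sym eqr_addr_id !eqr_addl_id.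
by rewrite (negbTE I_neq0) (negbTE K_neq0) (negbTE IK) (negbTE IK_neq0).
Qed.

Lemma tanner_girth_le8 : girth_le (tanner_adj a b) 8.
Proof.
have [IK | IK] := eqVneq I K.
  exists [:: inl 0; inr (inl 0); inl I; inr (inr (- J))]; split=> //.
  by apply: tanner_4cycle; rewrite ?opprK // addrC IK.
have [IK0 | IK0] := eqVneq (I + K) 0.
  exists [:: inl 0; inr (inl 0); inl I; inr (inr (I - J))]; split=> //.
  have KE : K = - I by apply/eqP; rewrite -addr_eq0 addrC IK0.
  by apply: tanner_4cycle; rewrite ?subKr // opprB -KE.
by eexists; split; first exact: (tanner_8cycle IK IK0).
Qed.

End WeightTwoTannerCycles.

Local Close Scope ring_scope.

Theorem lemma4 (n i j k : nat) :
  let a := padd (poly_one n) (monom n i) in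
  let b := padd (monom n j) (monom n (j + k)) in
  weight a = 2 -> weight b = 2 ->
  girth_le (tanner_adj a b) 8.
Proof.
case: n => [|[|m]] a b wa wb; try by have := weight_le a; rewrite wa.
have I_neq0 : (i%:R != 0 :> 'Z_m.+2)%R by rewrite eq_sym; apply: binomial_weight2_neq wa.
have wJK : (j%:R != (j + k)%:R :> 'Z_m.+2)%R by apply: binomial_weight2_neq wb.
have K_neq0 : (k%:R != 0 :> 'Z_m.+2)%R by rewrite natrD eqr_addr_id in wJK.
apply: (@tanner_girth_le8 _ _ _ i%:R%R j%:R%R k%:R%R) => //.
- exact: binomial_coef_neq0_l (binomial_weight2_neq wa).
- exact: binomial_coef_neq0_r (binomial_weight2_neq wa).
- exact: binomial_coef_neq0_l.
- by rewrite -natrD; apply: binomial_coef_neq0_r.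
Qed.
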